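(* Let the labels $\{1,\dots,k\}$ be partitioned into $b\ge2$ blocks of sizes $s_1,\dots,s_b$, let $L_{01,b}(i,j)=[i\text{ and }j\text{ are not in the same block}]$ with quadratic surrogate $\Phi_{quad}(f,y)=\frac1{2k}\|f+L_{01,b}(:,y)\|_2^2$, and let the scores be constrained to the subspace $\mathcal{F}_{01,b}=\mathrm{span}(L_{01,b})$ (the score vectors constant on each block). Then $$H_{\Phi_{quad},L_{01,b},\mathcal{F}_{01,b}}(\varepsilon)=\frac{\varepsilon^2}{4k}\min_{v\ne u}\frac{2s_vs_u}{s_v+s_u},\qquad0\le\varepsilon\le1.$$ In particular, if all blocks have the same size, $H_{\Phi_{quad},L_{01,b},\mathcal{F}_{01,b}}(\varepsilon)=\frac{\varepsilon^2}{4b}$.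
   Context: $\mathrm{span}(L)$ is the column space. $\mathrm{pred}(f)$ is the smallest index maximizing $f_c$. For $q\in\Delta_k$: $\ell(f,q)=\sum_cq_cL(\mathrm{pred}(f),c)$, $\phi(f,q)=\sum_cq_c\Phi(f,c)$, $\delta\ell(f,q)=\ell(f,q)-\inf_{\hat f\in\mathcal{F}}\ell(\hat f,q)$, $\delta\phi(f,q)=\phi(f,q)-\inf_{\hat f\in\mathcal{F}}\phi(\hat f,q)$; calibration function $H_{\Phi,L,\mathcal{F}}(\varepsilon)=\inf\{\delta\phi(f,q):f\in\mathcal{F},q\in\Delta_k,\delta\ell(f,q)\ge\varepsilon\}$ ($+\infty$ if empty). *)

From HB Require Import structures.
From mathcomp Require Import all_boot all_order all_algebra.
From mathcomp Require Import classical_sets reals constructive_ereal ereal.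
Set Implicit Arguments. Unset Strict Implicit. Unset Printing Implicit Defensive.
Import Order.TTheory GRing.Theory Num.Theory.
Local Open Scope ring_scope.
Local Open Scope classical_set_scope.

Section Generic.
Context {R : realType} {k : nat}.

Definition score := 'I_k -> R.

Definition span_set (L : 'I_k -> 'I_k -> R) : set score :=
  [set f | exists a : 'I_k -> R, forall c, f c = \sum_(j < k) a j * L c j].

Definition is_pred (f : score) (c : 'I_k) : bool :=
  [forall j, f j <= f c] && [forall j : 'I_k, (j < c)%N ==> (f j < f c)].

Definition pred_opt (f : score) : option 'I_k := [pick c | is_pred f c].

Definition simplex : set score :=
  [set q | (forall c, 0 <= q c) /\ \sum_(c < k) q c = 1].

(* l(f,q) = sum_c q_c L(pred f, c)  (pred f always exists when k > 0) *)
Definition task_loss (L : 'I_k -> 'I_k -> R) (f q : score) : R :=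
  match pred_opt f with
  | Some p => \sum_(c < k) q c * L p c
  | None => 0
  end.

Definition surr_risk (Phi : score -> 'I_k -> R) (f q : score) : R :=
  \sum_(c < k) q c * Phi f c.

Definition excess_loss (L : 'I_k -> 'I_k -> R) (F : set score) (f q : score) : R :=
  task_loss L f q - inf [set task_loss L g q | g in F].

Definition excess_surr (Phi : score -> 'I_k -> R) (F : set score) (f q : score) : R :=
  surr_risk Phi f q - inf [set surr_risk Phi g q | g in F].

(* calibration function H_{Phi,L,F}(eps); +oo if the set is empty *)
Definition calib (Phi : score -> 'I_k -> R) (L : 'I_k -> 'I_k -> R)
  (F : set score) (eps : R) : \bar R :=
  ereal_inf [set x : \bar R | exists f q, F f /\ simplex q /\
     eps <= excess_loss L F f q /\ x = (excess_surr Phi F f q)%:E].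

End Generic.

Section Blocks.
Context {R : realType} {k b : nat} (blk : 'I_k -> 'I_b).

Definition L01b : 'I_k -> 'I_k -> R := fun i j => (blk i != blk j)%:R.

Definition Phi_quad (f : 'I_k -> R) (y : 'I_k) : R :=
  (2 * k%:R)^-1 * \sum_(c < k) (f c + L01b c y) ^+ 2.

Definition block_size (v : 'I_b) : nat := #|[set i | blk i == v]|.

(* min_{v <> u} 2 s_v s_u / (s_v + s_u) (a finite set, so inf = min) *)
Definition min_harm : R :=
  inf [set x : R | exists v u : 'I_b, v != u /\
     x = 2 * (block_size v)%:R * (block_size u)%:R
         / ((block_size v)%:R + (block_size u)%:R)].

End Blocks.

(* Scores in span(L01b) are exactly the block-constant vectors [f = g \o blk].  With
   [Q u] the mass that [q] puts on block [u] and [s u] its size, the quadratic surrogate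
   has excess risk [(2k)^-1 * \sum_u s u * (g u + 1 - Q u)^2], while the task excess
   risk is [Q w - Q v] for a heaviest block [w] and the predicted block [v].  As
   [g v >= g w], a task excess [eps] forces [e v - e w >= eps] for [e u = g u + 1 - Q u],
   and the least value of [s v * e v^2 + s w * e w^2] under this constraint is
   [eps^2 * s v * s w / (s v + s w)].  Equality is reached on a pair of blocks minimizing
   the harmonic mean [2 s v s w / (s v + s w)]. *)

From mathcomp Require Import all_boot all_order all_algebra.
From mathcomp Require Import classical_sets reals constructive_ereal ereal.
From mathcomp Require Import ring lra.
Import Order.TTheory GRing.Theory Num.Theory.
Local Open Scope ring_scope.
Local Open Scope classical_set_scope.

Lemma inf_attained (R : realType) (E : set R) x : E x -> lbound E x -> inf E = x.
Proof.
move=> Ex lbx; apply/le_anti/andP; split; first exact: ge_inf (ex_intro _ x lbx) _ Ex.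
exact: lb_le_inf (ex_intro _ x Ex) lbx.
Qed.

Lemma weighted_sumsqr_ge (R : realFieldType) (sa sc a c eps : R) :
  0 < sa -> 0 < sc -> 0 <= eps -> eps <= a - c ->
  eps ^+ 2 * (sa * sc / (sa + sc)) <= sa * a ^+ 2 + sc * c ^+ 2.
Proof.
move=> sa0 sc0 eps0 eps_ac.
have sasc0 : 0 < sa * sc by exact: mulr_gt0.
have S0 : 0 < sa + sc by exact: addr_gt0.
have -> : sa * a ^+ 2 + sc * c ^+ 2
          = (sa * sc * (a - c) ^+ 2 + (sa * a + sc * c) ^+ 2) / (sa + sc).
  by field; rewrite gt_eqF.
rewrite mulrA ler_pM2r ?invr_gt0 // mulrC.
have : eps ^+ 2 <= (a - c) ^+ 2 by rewrite ler_sqr ?nnegrE //; lra.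
have := sqr_ge0 (sa * a + sc * c); nra.
Qed.

Lemma sum_supp2 {V : nmodType} {I : finType} (G : I -> V) x y : x != y ->
  (forall i, i != x -> i != y -> G i = 0) -> \sum_i G i = G x + G y.
Proof.
move=> xy G0; rewrite (bigD1 x) // (bigD1 y) 1?eq_sym //= big1 ?addr0 // => i.
by move=> /andP[]; exact: G0.
Qed.

Section Risks.
Context {R : realType} {k : nat}.
Implicit Types (f q : 'I_k -> R) (L : 'I_k -> 'I_k -> R).

Lemma is_pred_uniq f c c' : is_pred f c -> is_pred f c' -> c = c'.
Proof.
move=> /andP[/forallP le_c /forallP lt_c] /andP[/forallP le_c' /forallP lt_c'].
apply/val_inj; case: (ltngtP c c') => // [/(implyP (lt_c' c))|/(implyP (lt_c c'))].
- by rewrite ltNge le_c.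
- by rewrite ltNge le_c'.
Qed.

Lemma is_pred_exists (i0 : 'I_k) f : exists c, is_pred f c.
Proof.
have [m _ m_max'] := @arg_maxP _ R _ i0 xpredT f isT.
have m_max j : f j <= f m := m_max' j isT.
have [c /eqP fc c_min] := @arg_minnP _ m (fun i => f i == f m) val (eqxx _).
exists c; apply/andP; split; apply/forallP => j; rewrite fc; first exact: m_max.
apply/implyP => lt_jc; rewrite lt_neqAle m_max andbT.
by apply: contraTneq lt_jc => /eqP/c_min; rewrite leqNgt.
Qed.

Lemma pred_optE f c : is_pred f c -> pred_opt f = Some c.
Proof.
rewrite /pred_opt; case: pickP => [c' /is_pred_uniq/[apply]-> // | none].
by rewrite none.
Qed.

Definition expected_loss L q (c : 'I_k) : R := \sum_(y < k) q y * L c y.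

Lemma task_loss_pred L f q p : is_pred f p -> task_loss L f q = expected_loss L q p.
Proof. by move=> /pred_optE; rewrite /task_loss => ->. Qed.

Definition quad_surr L (f : 'I_k -> R) (y : 'I_k) : R :=
  (2 * k%:R)^-1 * \sum_(c < k) (f c + L c y) ^+ 2.

Lemma surr_risk_quadB L f g q : \sum_(y < k) q y = 1 ->
  surr_risk (quad_surr L) f q - surr_risk (quad_surr L) g q =
  (2 * k%:R)^-1 * \sum_(c < k) ((f c + expected_loss L q c) ^+ 2
                                - (g c + expected_loss L q c) ^+ 2).
Proof.
move=> q1; rewrite /surr_risk /quad_surr -sumrB.
under eq_bigr do rewrite -mulrBr -mulrBr mulrCA -sumrB mulr_sumr.
rewrite -mulr_sumr exchange_big /=; congr (_ * _); apply: eq_bigr => c _.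
transitivity (\sum_(y < k) (q y * (f c ^+ 2 - g c ^+ 2)
                            + 2 * (f c - g c) * (q y * L c y))).
  by apply: eq_bigr => y _; ring.
by rewrite big_split /= -mulr_suml -mulr_sumr q1 /expected_loss; ring.
Qed.

Lemma excess_surr_quad L f q : \sum_(y < k) q y = 1 ->
  excess_surr (quad_surr L) (span_set L) f q =
  (2 * k%:R)^-1 * \sum_(c < k) (f c + expected_loss L q c) ^+ 2.
Proof.
move=> q1; pose g0 c := - expected_loss L q c.
have g0_span : span_set L g0.
  by exists (fun y => - q y) => c; rewrite /g0 -sumrN; apply: eq_bigr => y _; rewrite mulNr.
have g0E : \sum_(c < k) (g0 c + expected_loss L q c) ^+ 2 = 0.
  by rewrite big1 // => c _; rewrite addNr expr0n.
rewrite /excess_surr (@inf_attained _ _ (surr_risk (quad_surr L) g0 q)).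
- by rewrite surr_risk_quadB // sumrB g0E subr0.
- by exists g0.
move=> _ [g _ <-]; rewrite -subr_ge0 surr_risk_quadB // sumrB g0E subr0.
by rewrite mulr_ge0 ?invr_ge0 ?mulr_ge0 ?ler0n ?sumr_ge0 // => c _; exact: sqr_ge0.
Qed.

End Risks.

Section Blocks.
Context {R : realType} {k b : nat} (blk : 'I_k -> 'I_b).
Implicit Types (f q : 'I_k -> R) (g : 'I_b -> R) (u v w : 'I_b).

Local Notation L := (@L01b R k b blk).
Local Notation F := (span_set L).
Local Notation s u := ((block_size blk u)%:R : R).

Definition block_mass q u : R := \sum_(j | blk j == u) q j.

Lemma sum_block_mass q : \sum_(u < b) block_mass q u = \sum_(c < k) q c.
Proof. by rewrite (partition_big blk predT). Qed.

Lemma block_mass_comp (G : 'I_b -> R) u : block_mass (G \o blk) u = s u * G u.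
Proof.
rewrite /block_mass (eq_bigr (fun _ => G u)) => [|i /eqP <- //].
rewrite sumr_const mulr_natl /block_size; congr (_ *+ _).
by apply: eq_card => i; apply/idP/idP => [/mem_set | /set_mem].
Qed.

Lemma sum_by_block (G : 'I_b -> R) : \sum_(c < k) G (blk c) = \sum_(u < b) s u * G u.
Proof.
by rewrite -(sum_block_mass (G \o blk)); apply: eq_bigr => u _; rewrite block_mass_comp.
Qed.

Lemma sum_block_size : \sum_(u < b) s u = k%:R.
Proof.
transitivity (\sum_(c < k) (1 : R)); last by rewrite sumr_const card_ord.
by rewrite (sum_by_block (fun=> 1)); apply: eq_bigr => u _; rewrite mulr1.
Qed.

Lemma expected_loss_L01b q c : \sum_(y < k) q y = 1 ->
  expected_loss L q c = 1 - block_mass q (blk c).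
Proof.
move=> q1; rewrite -q1 /expected_loss /block_mass (bigID (fun y => blk y == blk c)) /=.
rewrite [X in _ = X - _](bigID (fun y => blk y == blk c)) /= addrAC subrr add0r.
rewrite big1 ?add0r => [|y /eqP yc]; last by rewrite /L01b yc eqxx mulr0.
by apply: eq_bigr => y; rewrite /L01b eq_sym => /negbTE ->; rewrite mulr1.
Qed.

Lemma span_L01b_block f : F f -> exists g, f =1 g \o blk.
Proof.
move=> [a fE]; exists (fun u => \sum_(j < k) a j * (u != blk j)%:R) => c.
exact: fE.
Qed.

Lemma excess_surr_block f g q : \sum_(y < k) q y = 1 -> f =1 g \o blk ->
  excess_surr (Phi_quad blk) F f q =
  (2 * k%:R)^-1 * \sum_(u < b) s u * (g u + 1 - block_mass q u) ^+ 2.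
Proof.
move=> q1 fE; rewrite [LHS](excess_surr_quad _ _ _ q1) -sum_by_block.
by congr (_ * _); apply: eq_bigr => c _; rewrite fE expected_loss_L01b // addrA.
Qed.

Definition harm u v : R := 2 * s u * s v / (s u + s v).

Lemma harmC u v : harm u v = harm v u.
Proof. by rewrite /harm; congr (_ / _); [rewrite mulrAC | rewrite addrC]. Qed.

Lemma min_harm_le u v : u != v -> @min_harm R k b blk <= harm u v.
Proof.
move=> uv; apply: ge_inf; last by exists u, v.
exists 0 => _ [u' [v' [_ ->]]].
by rewrite divr_ge0 ?mulr_ge0 ?addr_ge0 ?ler0n.
Qed.

Lemma min_harm_attained :
  (1 < b)%N -> exists u v, u != v /\ @min_harm R k b blk = harm u v.
Proof.
move=> b_gt1; pose u0 : 'I_b := Ordinal (ltnW b_gt1); pose u1 : 'I_b := Ordinal b_gt1.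
have [[u v] /= uv uv_min] :=
  @arg_minP _ R _ (u0, u1) (fun p => p.1 != p.2) (fun p => harm p.1 p.2) isT.
exists u, v; split => //; apply: inf_attained; first by exists u, v.
by move=> _ [u' [v' [uv' ->]]]; exact: (uv_min (u', v')).
Qed.

Section Surjective.
Hypothesis (b_gt1 : (1 < b)%N) (blk_surj : forall u, exists i, blk i = u).

Lemma block_size_gt0 u : 0 < s u.
Proof.
have [i iu] := blk_surj u; rewrite ltr0n; apply/card_gt0P; exists i.
by apply: mem_set; rewrite /= iu.
Qed.

(* Coefficients [a u / s u] on the columns of block [u] give [f c = \sum_(u != blk c) a u],
   which is inverted by [a u = (\sum_v g v) / (b - 1) - g u]. *)
Lemma block_fun_span g : F (g \o blk).
Proof.
pose a u := (\sum_(v < b) g v) / (b%:R - 1) - g u.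
exists (fun j => a (blk j) / s (blk j)) => c /=.
rewrite (sum_by_block (fun u => a u / s u * (blk c != u)%:R)).
have s_neq0 u : s u != 0 := lt0r_neq0 (block_size_gt0 u).
under eq_bigr => u _ do rewrite mulrA mulrCA divff // mulr1.
rewrite (bigD1 (blk c)) //= eqxx mulr0 add0r.
under eq_bigr => u ne do rewrite eq_sym ne mulr1.
have -> : \sum_(u < b | u != blk c) a u = \sum_(u < b) a u - a (blk c).
  by rewrite [X in _ = X - _](bigD1 (blk c)) //= addrC addrK.
rewrite /a sumrB sumr_const card_ord -mulr_natl.
have b1 : b%:R - 1 != 0 :> R by rewrite subr_eq0 pnatr_eq1 gtn_eqF.
by field.
Qed.

Lemma inf_task_loss_L01b q w : \sum_(y < k) q y = 1 ->
  (forall u, block_mass q u <= block_mass q w) ->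
  inf [set task_loss L g q | g in F] = 1 - block_mass q w.
Proof.
move=> q1 w_max; have [i iw] := blk_surj w.
pose gw c : R := (blk c == w)%:R.
have [p p_pred] := is_pred_exists i gw.
have pw : blk p = w.
  move: p_pred => /andP[/forallP /(_ i) + _]; rewrite /gw iw eqxx.
  by case: eqP => // _; rewrite ler10.
apply: inf_attained.
  exists gw; first exact: (block_fun_span (fun u => (u == w)%:R)).
  by rewrite (task_loss_pred _ _ _ _ p_pred) expected_loss_L01b // pw.
move=> _ [g _ <-]; have [p' p'_pred] := is_pred_exists i g.
by rewrite (task_loss_pred _ _ _ _ p'_pred) expected_loss_L01b // lerD2l lerN2.
Qed.

Lemma excess_loss_L01b f q p w : \sum_(y < k) q y = 1 -> is_pred f p ->
  (forall u, block_mass q u <= block_mass q w) ->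
  excess_loss L F f q = block_mass q w - block_mass q (blk p).
Proof.
move=> q1 p_pred w_max; rewrite /excess_loss (inf_task_loss_L01b _ _ q1 w_max).
by rewrite (task_loss_pred _ _ _ _ p_pred) expected_loss_L01b //; ring.
Qed.

Lemma excess_surr_ge f q eps : F f -> \sum_(y < k) q y = 1 -> 0 <= eps ->
  eps <= excess_loss L F f q ->
  eps ^+ 2 / (4 * k%:R) * @min_harm R k b blk <= excess_surr (Phi_quad blk) F f q.
Proof.
move=> f_span q1 eps0; have [g fE] := span_L01b_block _ f_span.
have [i0 _] := blk_surj (Ordinal (ltnW b_gt1)).
have [p p_pred] := is_pred_exists i0 f.
have [w _ w_max] := @arg_maxP _ R _ (blk i0) xpredT (block_mass q) isT.
rewrite (excess_loss_L01b _ _ _ w q1 p_pred) => [gap|u]; last exact: w_max.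
rewrite (excess_surr_block _ _ _ q1 fE).
set e := fun u => g u + 1 - block_mass q u; set v := blk p in gap *.
have [vw|vw] := eqVneq v w.
  have -> : eps = 0 by apply/le_anti; rewrite eps0 andbT; move: gap; rewrite vw subrr.
  rewrite expr0n !mul0r mulr_ge0 ?invr_ge0 ?mulr_ge0 ?ler0n ?sumr_ge0 // => u _.
  by rewrite mulr_ge0 ?ler0n ?sqr_ge0.
have [iw iwE] := blk_surj w.
have e_gap : eps <= e v - e w.
  move: p_pred => /andP[/forallP /(_ iw) + _]; rewrite !fE /= iwE -/v /e; lra.
have two_blocks : s v * e v ^+ 2 + s w * e w ^+ 2 <= \sum_(u < b) s u * e u ^+ 2.
  rewrite (bigD1 v) // (bigD1 w) 1?eq_sym //= addrA lerDl.
  by apply: sumr_ge0 => u _; rewrite mulr_ge0 ?ler0n ?sqr_ge0.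
apply: (@le_trans _ _ (eps ^+ 2 / (4 * k%:R) * harm v w)).
  by rewrite ler_wpM2l ?divr_ge0 ?sqr_ge0 ?mulr_ge0 ?ler0n ?min_harm_le.
have k_gt0 : (0 < k)%N by apply: leq_ltn_trans (ltn_ord i0).
have -> : eps ^+ 2 / (4 * k%:R) * harm v w
          = (2 * k%:R)^-1 * (eps ^+ 2 * (s v * s w / (s v + s w))).
  rewrite /harm; field.
  by rewrite lt0r_neq0 ?addr_gt0 ?block_size_gt0 // pnatr_eq0 -lt0n k_gt0.
rewrite ler_wpM2l ?invr_ge0 ?mulr_ge0 ?ler0n //.
apply: le_trans _ two_blocks.
by apply: weighted_sumsqr_ge; rewrite ?block_size_gt0.
Qed.

(* The extremal pair: [q] puts mass [(1 - eps)/2] on block [v] and [(1 + eps)/2] on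
   block [w]; the scores are the surrogate minimizer [-Lq] shifted on [v] and [w] by the
   least [s]-weighted square amount that makes their scores tie, and the tie is resolved
   in favour of [v] because block [v] contains the first index [m] of the two blocks. *)
Section Witness.
Variables (v w : 'I_b) (eps : R) (m : 'I_k).
Hypotheses (vw : v != w) (eps0 : 0 <= eps) (eps1 : eps <= 1).
Hypotheses (mv : blk m = v) (m_first : forall j, blk j \in [:: v; w] -> (m <= j)%N).

Definition witness_mass u : R :=
  if u == v then (1 - eps) / 2 else if u == w then (1 + eps) / 2 else 0.

Definition witness_q : 'I_k -> R := (fun u => witness_mass u / s u) \o blk.

Definition witness_shift u : R :=
  if u == v then eps * s w / (s v + s w)
  else if u == w then - (eps * s v / (s v + s w)) else 0.

Definition witness_score u : R := witness_mass u - 1 + witness_shift u.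

Local Notation witness_f := (witness_score \o blk).

Let vwF : (v == w) = false. Proof. exact: negbTE. Qed.
Let wvF : (w == v) = false. Proof. by rewrite eq_sym vwF. Qed.
Let S_gt0 : 0 < s v + s w. Proof. by rewrite addr_gt0 ?block_size_gt0. Qed.

Lemma block_mass_witness u : block_mass witness_q u = witness_mass u.
Proof.
by rewrite block_mass_comp mulrCA divff ?mulr1 ?lt0r_neq0 ?block_size_gt0.
Qed.

Lemma witness_q_simplex : simplex witness_q.
Proof.
split=> [c|].
  rewrite divr_ge0 ?ler0n // /witness_mass.
  by do 2?case: ifP => _; rewrite ?divr_ge0 ?subr_ge0 ?addr_ge0.
rewrite -sum_block_mass (eq_bigr _ (fun u _ => block_mass_witness u)).
rewrite (sum_supp2 _ _ _ vw) => [|u /negbTE uv /negbTE uw].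
  by rewrite /witness_mass eqxx wvF eqxx; field.
by rewrite /witness_mass uv uw.
Qed.

Lemma is_pred_witness : is_pred witness_f m.
Proof.
have score_w : witness_score w = witness_score v.
  rewrite /witness_score /witness_mass /witness_shift eqxx vwF wvF eqxx.
  by field; rewrite lt0r_neq0.
have score_v : -1 < witness_score v.
  rewrite /witness_score /witness_mass /witness_shift !eqxx -subr_gt0.
  have -> : (1 - eps) / 2 - 1 + eps * s w / (s v + s w) - -1
            = ((1 - eps) * s v + (1 + eps) * s w) / (2 * (s v + s w)).
    by field; rewrite lt0r_neq0.
  rewrite divr_gt0 ?mulr_gt0 // ltr_wpDl ?mulr_ge0 ?subr_ge0 ?ler0n //.
  by rewrite mulr_gt0 ?block_size_gt0 // ltr_wpDr.
have score_other u : u != v -> u != w -> witness_score u = -1.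
  move=> /negbTE uv /negbTE uw.
  by rewrite /witness_score /witness_mass /witness_shift uv uw; ring.
apply/andP; split; apply/forallP => j /=; rewrite mv.
- have [->|jv] := eqVneq (blk j) v; first exact: lexx.
  have [->|jw] := eqVneq (blk j) w; first by rewrite score_w.
  by rewrite score_other // ltW.
- apply/implyP => jm; rewrite score_other //.
  + by apply: contraTneq jm => jv; rewrite -leqNgt m_first // inE jv eqxx.
  + by apply: contraTneq jm => jw; rewrite -leqNgt m_first // !inE jw eqxx orbT.
Qed.

Lemma excess_loss_witness : excess_loss L F witness_f witness_q = eps.
Proof.
have [_ q1] := witness_q_simplex.
rewrite (excess_loss_L01b _ _ _ w q1 is_pred_witness) => [|u].
  by rewrite !block_mass_witness mv /witness_mass eqxx wvF eqxx; field.
rewrite !block_mass_witness /witness_mass eqxx wvF.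
have le_half : (1 - eps) / 2 <= (1 + eps) / 2.
  by rewrite ler_pM2r // lerD2l (le_trans _ eps0) ?oppr_le0.
by do 2?case: ifP => _; rewrite ?divr_ge0 ?addr_ge0.
Qed.

Lemma excess_surr_witness :
  excess_surr (Phi_quad blk) F witness_f witness_q = eps ^+ 2 / (4 * k%:R) * harm v w.
Proof.
have [_ q1] := witness_q_simplex.
rewrite (excess_surr_block _ witness_score _ q1) //.
have shiftE u : witness_score u + 1 - witness_mass u = witness_shift u.
  by rewrite /witness_score; ring.
under eq_bigr do rewrite block_mass_witness shiftE.
rewrite (sum_supp2 _ _ _ vw) => [|u /negbTE uv /negbTE uw]; last first.
  by rewrite /witness_shift uv uw expr0n mulr0.
have [i _] := blk_surj v; have k_gt0 : (0 < k)%N by apply: leq_ltn_trans (ltn_ord i).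
rewrite /witness_shift /harm eqxx wvF eqxx; field.
by rewrite lt0r_neq0 // pnatr_eq0 -lt0n k_gt0.
Qed.

Lemma calib_le_harm :
  (calib (Phi_quad blk) L F eps <= (eps ^+ 2 / (4 * k%:R) * harm v w)%:E)%E.
Proof.
apply: ge_ereal_inf; rewrite -excess_surr_witness.
exists (excess_surr (Phi_quad blk) F witness_f witness_q)%:E => //.
exists witness_f, witness_q; split; first exact: block_fun_span.
by split; [exact: witness_q_simplex | rewrite excess_loss_witness].
Qed.

End Witness.

Lemma calib_le eps : 0 <= eps <= 1 ->
  (calib (Phi_quad blk) L F eps <= (eps ^+ 2 / (4 * k%:R) * @min_harm R k b blk)%:E)%E.
Proof.
move=> /andP[eps0 eps1]; have [v [w [vw ->]]] := min_harm_attained b_gt1.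
have [i iv] := blk_surj v; have i_vw : blk i \in [:: v; w] by rewrite iv inE eqxx.
have [m m_vw m_first] := @arg_minnP _ i (fun j => blk j \in [:: v; w]) val i_vw.
move: (m_vw); rewrite !inE => /orP[/eqP mv | /eqP mw].
  exact: (calib_le_harm _ _ _ _ vw eps0 eps1 mv m_first).
rewrite harmC; apply: (calib_le_harm _ _ _ _ _ eps0 eps1 mw); first by rewrite eq_sym.
by move=> j j_wv; apply: m_first; move: j_wv; rewrite !inE orbC.
Qed.

Lemma calibE eps : 0 <= eps <= 1 ->
  calib (Phi_quad blk) L F eps = (eps ^+ 2 / (4 * k%:R) * @min_harm R k b blk)%:E.
Proof.
move=> eps01; apply/le_anti/andP; split; first exact: calib_le.
apply: le_ereal_inf_tmp => _ [f [q [f_span [[_ q1] [gap ->]]]]].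
by rewrite lee_fin excess_surr_ge //; case/andP: eps01.
Qed.

Lemma min_harm_uniform u : (forall u' v, block_size blk u' = block_size blk v) ->
  @min_harm R k b blk = s u.
Proof.
move=> uniform; have [v [w [_ ->]]] := min_harm_attained b_gt1.
rewrite /harm (uniform v u) (uniform w u); field.
by rewrite lt0r_neq0 ?addr_gt0 ?block_size_gt0.
Qed.

End Surjective.
End Blocks.

Theorem proposition14 (R : realType) (k b : nat) (blk : 'I_k -> 'I_b) :
  (2 <= b)%N ->
  (forall v : 'I_b, exists i : 'I_k, blk i = v) ->
  (forall eps : R, 0 <= eps <= 1 ->
     calib (Phi_quad blk) (L01b blk) (span_set (L01b blk)) eps =
     ((eps ^+ 2 / (4 * k%:R)) * @min_harm R k b blk)%:E)
  /\
  ((forall v u : 'I_b, block_size blk v = block_size blk u) ->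
   forall eps : R, 0 <= eps <= 1 ->
     calib (Phi_quad blk) (L01b blk) (span_set (L01b blk)) eps =
     (eps ^+ 2 / (4 * b%:R))%:E).
Proof.
move=> b_gt1 blk_surj; split=> [|uniform eps eps01]; first exact: calibE.
rewrite calibE //; congr (_%:E).
pose u0 : 'I_b := Ordinal (ltnW b_gt1).
have s0_gt0 : 0 < (block_size blk u0)%:R :> R := block_size_gt0 blk blk_surj u0.
have kE : k%:R = b%:R * (block_size blk u0)%:R :> R.
  rewrite -(sum_block_size blk) (eq_bigr _ (fun u _ => congr1 _ (uniform u u0))).
  by rewrite sumr_const card_ord mulr_natl.
rewrite (min_harm_uniform blk b_gt1 blk_surj u0 uniform) kE; field.
by rewrite !lt0r_neq0 // ltr0n ltnW.
Qed.
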